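(* Let $F\in C^3(\mathbb{R}^n\setminus\{0\})$ be a strongly convex norm on $\mathbb{R}^n$, and let $u$ be a $C^2$ function on an open set $U\subset\mathbb{R}^n$. With the summation convention, $F=F(\nabla u)$, $F_i=F_{\xi_i}(\nabla u)$, $a_{ij}=\frac{\partial^2}{\partial\xi_i\partial\xi_j}(\tfrac12F^2)(\nabla u)=F_iF_j+FF_{\xi_i\xi_j}(\nabla u)$, and $u_{ij}=\partial^2u/\partial x_i\partial x_j$, at every point where $\nabla u\neq0$ one has $$a_{ij}a_{kl}u_{ik}u_{jl}\ge a_{ij}F_kF_lu_{ik}u_{jl}.$$
   Context: A norm on $\mathbb{R}^n$ is a convex, even, positively $1$-homogeneous function $F:\mathbb{R}^n\to[0,\infty)$, $C^1$ away from $0$, positive away from $0$. It is strongly convex if $\mathrm{Hess}(F^2)$ is positive definite on $\mathbb{R}^n\setminus\{0\}$. *)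

From HB Require Import structures.
From mathcomp Require Import all_boot all_order all_algebra.
From mathcomp Require Import all_classical all_reals all_analysis.
Set Implicit Arguments. Unset Strict Implicit. Unset Printing Implicit Defensive.
Import Order.TTheory GRing.Theory Num.Theory.
Import numFieldNormedType.Exports.
Local Open Scope classical_set_scope.
Local Open Scope ring_scope.

Definition ebasis (R : realType) (n : nat) (i : 'I_n) : 'rV[R]_n := delta_mx 0 i.

Definition pd (R : realType) (n : nat) (i : 'I_n) (f : 'rV[R]_n -> R)
  : 'rV[R]_n -> R := fun x => 'D_(ebasis R i) f x.

(* C^k on a set U (intended to be open): all partials of order <= k exist,
   (k-1)-st order partials are (Frechet) differentiable, k-th order are continuous. *)
Fixpoint Ck (R : realType) (n : nat) (k : nat) (U : set 'rV[R]_n)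
    (f : 'rV[R]_n -> R) : Prop :=
  match k with
  | 0 => forall x, U x -> {for x, continuous f}
  | k'.+1 => (forall x, U x -> differentiable f x) /\
             (forall i : 'I_n, Ck k' U (pd i f))
  end.

Definition grad (R : realType) (n : nat) (f : 'rV[R]_n -> R) (x : 'rV[R]_n)
  : 'rV[R]_n := \row_i pd i f x.
Definition hess (R : realType) (n : nat) (f : 'rV[R]_n -> R) (x : 'rV[R]_n)
  : 'M[R]_n := \matrix_(i, j) pd i (pd j f) x.

Definition is_norm (R : realType) (n : nat) (F : 'rV[R]_n -> R) : Prop :=
  (forall x, 0 <= F x) /\
  (forall (x y : 'rV[R]_n) (t : R), 0 <= t <= 1 ->
      F ((1 - t) *: x + t *: y) <= (1 - t) * F x + t * F y) /\
  (forall x, F (- x) = F x) /\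
  (forall (t : R) x, 0 < t -> F (t *: x) = t * F x) /\
  Ck 1 (~` [set 0]) F /\
  (forall x, x != 0 -> 0 < F x).

Definition strongly_convex (R : realType) (n : nat) (F : 'rV[R]_n -> R) : Prop :=
  forall xi : 'rV[R]_n, xi != 0 ->
    forall v : 'rV[R]_n, v != 0 ->
      0 < (v *m hess (fun z => F z ^+ 2) xi *m v^T) 0 0.

From HB Require Import structures.
From mathcomp Require Import all_boot all_order all_algebra.
From mathcomp Require Import all_classical all_reals all_analysis.
From mathcomp Require Import ring lra.
Import Order.TTheory GRing.Theory Num.Theory.
Import numFieldNormedType.Exports.
Local Open Scope ring_scope.
Set Implicit Arguments. Unset Strict Implicit. Unset Printing Implicit Defensive.

(* At xi = grad u with F(xi) > 0, the matrix A = Hess(F^2/2)(xi) is symmetric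
   (Schwarz) and positive semidefinite (strong convexity), and Euler's relation
   for the 1-homogeneous F and the 0-homogeneous grad F gives A q = grad F(xi)
   with q = xi / F(xi) and grad F(xi) . q = 1.  For X = D^2 u and s = X grad F,
   the left side minus the right side equals tr(A Y A Y^T) with Y = X - s q^T,
   which is nonnegative as the trace of the product of the psd matrices A and
   Y^T A Y. *)

Section QuadraticForms.
Variables (R : realFieldType) (n : nat).
Implicit Types (A X Z : 'I_n -> 'I_n -> R) (f v w : 'I_n -> R).

Definition bform A v w := \sum_i \sum_j v i * A i j * w j.
Definition qform A v := bform A v v.
Definition is_symmetric A := forall i j, A i j = A j i.
Definition is_psd A := forall v, 0 <= qform A v.
Definition unit_vec (i : 'I_n) : 'I_n -> R := fun a => (a == i)%:R.

Lemma sum_mul_unit_vec f i : \sum_a f a * unit_vec i a = f i.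
Proof.
rewrite (bigD1 i) //= /unit_vec eqxx mulr1 big1 ?addr0 // => a /negPf ->.
by rewrite mulr0.
Qed.

Lemma sum_unit_vec_mul f i : \sum_a unit_vec i a * f a = f i.
Proof. by rewrite -[RHS](sum_mul_unit_vec f i); apply: eq_bigr => a _; rewrite mulrC. Qed.

Lemma bformC A v w : is_symmetric A -> bform A v w = bform A w v.
Proof.
move=> sA; rewrite /bform exchange_big; apply: eq_bigr => i _.
by apply: eq_bigr => j _; rewrite sA; ring.
Qed.

Lemma qformDZ A v w t : is_symmetric A ->
  qform A (fun a => v a + t * w a) = qform A v + 2 * t * bform A v w + t ^+ 2 * qform A w.
Proof.
move=> sA; rewrite /qform /bform.
transitivity (\sum_i \sum_j (v i * A i j * v j + t * (v i * A i j * w j)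
    + t * (w i * A i j * v j) + t ^+ 2 * (w i * A i j * w j))).
  by apply: eq_bigr => i _; apply: eq_bigr => j _; ring.
under eq_bigr => i _ do rewrite !big_split /= -!big_distrr /=.
rewrite !big_split /= -!big_distrr /=.
have := bformC w v sA; rewrite /bform => ->; ring.
Qed.

Lemma qform_unit_vec A i : qform A (unit_vec i) = A i i.
Proof.
rewrite /qform /bform; under eq_bigr => a _ do rewrite sum_mul_unit_vec.
by rewrite sum_unit_vec_mul.
Qed.

Lemma bform_unit_vec A v i : bform A v (unit_vec i) = \sum_a v a * A a i.
Proof. by apply: eq_bigr => a _; rewrite sum_mul_unit_vec. Qed.

Lemma psd_diag_ge0 A i : is_psd A -> 0 <= A i i.
Proof. by move=> pA; rewrite -qform_unit_vec. Qed.

Lemma psd_diag_eq0 A i j : is_symmetric A -> is_psd A -> A i i = 0 -> A j i = 0.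
Proof.
move=> sA pA Aii.
have ge0 t : 0 <= A j j + 2 * t * A j i.
  have := pA (fun a => unit_vec j a + t * unit_vec i a).
  by rewrite qformDZ // !qform_unit_vec bform_unit_vec sum_unit_vec_mul Aii; lra.
apply/eqP/negPn/negP => Aji_neq0.
have := ge0 (- (A j j + 1) / (2 * A j i)).
have -> : 2 * (- (A j j + 1) / (2 * A j i)) * A j i = - (A j j + 1) by field.
lra.
Qed.

Definition frob A Z := \sum_k \sum_l A k l * Z k l.

Definition schur A i := fun k l => A k l - A k i * A i l / A i i.

Section Schur.
Variables (A : 'I_n -> 'I_n -> R) (i : 'I_n).
Hypotheses (sA : is_symmetric A) (pA : is_psd A) (Aii_gt0 : 0 < A i i).
Let Aii_neq0 : A i i != 0 := lt0r_neq0 Aii_gt0.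

Lemma schur_sym : is_symmetric (schur A i).
Proof. by move=> k l; rewrite /schur sA [A k i]sA [A i l]sA; ring. Qed.

Lemma qform_schur v :
  qform (schur A i) v = qform A v - (\sum_a v a * A a i) ^+ 2 / A i i.
Proof.
rewrite expr2 -mulrA big_distrl /= /qform /bform -sumrB; apply: eq_bigr => k _.
rewrite mulr_suml big_distrr /= -sumrB; apply: eq_bigr => l _.
by rewrite /schur [A i l]sA; field.
Qed.

Lemma schur_psd : is_psd (schur A i).
Proof.
move=> v; set b := \sum_a v a * A a i.
have := pA (fun a => v a + (- b / A i i) * unit_vec i a).
rewrite qformDZ // qform_unit_vec bform_unit_vec -/b qform_schur -/b.
by congr (0 <= _); field.
Qed.

Lemma schur_support :
  [set k | schur A i k k != 0] \subset [set k | A k k != 0] :\ i.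
Proof.
apply/fintype.subsetP => k; rewrite !inE /schur => nz; apply/andP; split.
  by apply: contraNneq nz => ->; apply/eqP; field.
apply: contraNneq nz => Akk; rewrite Akk [A k i]sA (psd_diag_eq0 i sA pA Akk).
by rewrite !mul0r subrr.
Qed.

Lemma frob_schur Z :
  frob A Z = frob (schur A i) Z + qform Z (fun k => A k i) / A i i.
Proof.
rewrite /frob /qform /bform big_distrl /= -big_split /=; apply: eq_bigr => k _.
rewrite big_distrl /= -big_split /=; apply: eq_bigr => l _.
by rewrite /schur [A l i]sA; field.
Qed.

End Schur.

Lemma frob_eq0 A Z : (forall i, A i i = 0) -> is_symmetric A -> is_psd A ->
  frob A Z = 0.
Proof.
move=> A0 sA pA; apply: big1 => k _; apply: big1 => l _.
by rewrite (psd_diag_eq0 k sA pA (A0 l)) mul0r.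
Qed.

(* Induction on the number of nonzero diagonal entries of A: the Schur complement
   at a positive pivot is again psd and loses that diagonal entry. *)
Lemma frob_psd_ge0 A Z : is_symmetric A -> is_psd A -> is_psd Z -> 0 <= frob A Z.
Proof.
move=> + + pZ; have [m] := ubnP #|[set i | A i i != 0]|.
elim: m A => [|m IH] A //; rewrite ltnS => supp sA pA.
case: (pickP [pred i | A i i != 0]) => [i /= Aii_neq0 | A0]; last first.
  by rewrite frob_eq0 // => k; have /negbFE/eqP := A0 k.
have Aii_gt0 : 0 < A i i by rewrite lt_def Aii_neq0 psd_diag_ge0.
rewrite (frob_schur sA Aii_gt0); apply: addr_ge0; last exact: divr_ge0 (pZ _) (ltW _).
apply: IH; [|exact: schur_sym | exact: schur_psd].
apply: leq_ltn_trans (subset_leq_card (schur_support sA pA Aii_gt0)) _.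
by move: supp; rewrite (cardsD1 i) inE Aii_neq0.
Qed.

Lemma exchange_big_pairs (F : 'I_n -> 'I_n -> 'I_n -> 'I_n -> R) :
  \sum_k \sum_l \sum_i \sum_j F k l i j = \sum_i \sum_j \sum_k \sum_l F k l i j.
Proof.
under eq_bigr => k _ do rewrite exchange_big /=.
under eq_bigr => k _ do under eq_bigr => i _ do rewrite exchange_big /=.
rewrite exchange_big /=.
by under eq_bigr => i _ do rewrite exchange_big /=.
Qed.

Definition congruence A X := fun k l => \sum_i \sum_j X i k * A i j * X j l.

Lemma qform_congruence A X v :
  qform (congruence A X) v = qform A (fun i => \sum_k X i k * v k).
Proof.
rewrite /qform /bform /congruence; symmetry.
transitivity (\sum_i \sum_j \sum_k \sum_l X i k * v k * A i j * (X j l * v l)).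
  apply: eq_bigr => i _; apply: eq_bigr => j _.
  rewrite !mulr_suml; apply: eq_bigr => k _.
  by rewrite mulr_sumr.
rewrite -exchange_big_pairs; apply: eq_bigr => k _; apply: eq_bigr => l _.
rewrite mulr_sumr mulr_suml; apply: eq_bigr => i _.
rewrite mulr_sumr mulr_suml; apply: eq_bigr => j _.
ring.
Qed.

Lemma congruence_psd A X : is_psd A -> is_psd (congruence A X).
Proof. by move=> pA v; rewrite qform_congruence. Qed.

Definition sandwich A X Y :=
  \sum_i \sum_j \sum_k \sum_l A i j * A k l * X i k * Y j l.

Lemma sandwich_ge0 A X : is_symmetric A -> is_psd A -> 0 <= sandwich A X X.
Proof.
move=> sA pA.
have -> : sandwich A X X = frob A (congruence A X).
  rewrite /sandwich /frob /congruence -exchange_big_pairs; apply: eq_bigr => k _.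
  apply: eq_bigr => l _; rewrite mulr_sumr; apply: eq_bigr => i _.
  by rewrite mulr_sumr; apply: eq_bigr => j _; rewrite [A i j]sA; ring.
exact/frob_psd_ge0/congruence_psd.
Qed.

Lemma sandwichC A X Y : is_symmetric A -> sandwich A X Y = sandwich A Y X.
Proof.
move=> sA; rewrite /sandwich [RHS]exchange_big; apply: eq_bigr => i _.
apply: eq_bigr => j _; rewrite [RHS]exchange_big; apply: eq_bigr => k _.
by apply: eq_bigr => l _; rewrite [A j i]sA [A l k]sA; ring.
Qed.

Lemma sandwichBB A X W :
  sandwich A (fun i k => X i k - W i k) (fun i k => X i k - W i k) =
  sandwich A X X - sandwich A X W - sandwich A W X + sandwich A W W.
Proof.
rewrite /sandwich -!sumrB -big_split /=; apply: eq_bigr => i _.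
rewrite -!sumrB -big_split /=; apply: eq_bigr => j _.
rewrite -!sumrB -big_split /=; apply: eq_bigr => k _.
rewrite -!sumrB -big_split /=; apply: eq_bigr => l _.
ring.
Qed.

Lemma sandwich_outer_r A X s q :
  sandwich A X (fun j l => s j * q l) =
  bform A (fun i => \sum_k X i k * \sum_l A k l * q l) s.
Proof.
apply: eq_bigr => i _; apply: eq_bigr => j _.
rewrite !mulr_suml; apply: eq_bigr => k _.
by rewrite !mulr_sumr !mulr_suml; apply: eq_bigr => l _; ring.
Qed.

Lemma sandwich_ge_rank_one A p q X :
  is_symmetric A -> is_psd A ->
  (forall j, \sum_i q i * A i j = p j) -> \sum_i p i * q i = 1 ->
  \sum_i \sum_j \sum_k \sum_l A i j * p k * p l * X i k * X j l <= sandwich A X X.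
Proof.
move=> sA pA Aq_eq pq.
have Aq k : \sum_l A k l * q l = p k.
  by rewrite -Aq_eq; apply: eq_bigr => l _; rewrite sA mulrC.
set s := fun i => \sum_k X i k * p k.
set W := fun i k => s i * q k.
have -> : \sum_i \sum_j \sum_k \sum_l A i j * p k * p l * X i k * X j l = qform A s.
  apply: eq_bigr => i _; apply: eq_bigr => j _.
  rewrite /s !mulr_suml; apply: eq_bigr => k _.
  by rewrite mulr_sumr; apply: eq_bigr => l _; ring.
have XW : sandwich A X W = qform A s.
  rewrite sandwich_outer_r /qform; congr bform; apply/funext => i.
  by apply: eq_bigr => k _; rewrite Aq.
have WW : sandwich A W W = qform A s.
  rewrite sandwich_outer_r /qform; congr bform; apply/funext => i.
  under eq_bigr => k _ do rewrite Aq.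
  under eq_bigr => k _ do rewrite /W -mulrA.
  rewrite -big_distrr /= -[RHS]mulr1 -pq; congr (_ * _).
  by apply: eq_bigr => k _; rewrite mulrC.
have := sandwich_ge0 (fun i k => X i k - W i k) sA pA.
by rewrite sandwichBB (sandwichC W X) // XW WW; lra.
Qed.

End QuadraticForms.

Section SecondOrderRate.
Variable R : realType.

Definition approx_sq (D : R -> R) (c : R) := forall eps, 0 < eps ->
  exists2 eta, 0 < eta & forall h, 0 < h < eta -> `|D h - h ^+ 2 * c| <= eps * h ^+ 2.

Lemma approx_sq_le D a b : approx_sq D a -> approx_sq D b -> a <= b.
Proof.
move=> Da Db; apply/ler_addgt0Pr => eps eps_gt0.
have eps2_gt0 : 0 < eps / 2 by rewrite divr_gt0.
have [eta1 eta1_gt0 Ha] := Da _ eps2_gt0; have [eta2 eta2_gt0 Hb] := Db _ eps2_gt0.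
have min_gt0 : 0 < Num.min eta1 eta2 by rewrite lt_min eta1_gt0.
set h := Num.min eta1 eta2 / 2.
have h_gt0 : 0 < h by rewrite divr_gt0.
have : h < Num.min eta1 eta2 by rewrite /h; lra.
rewrite lt_min => /andP[h_lt1 h_lt2].
have := Ha h; rewrite h_gt0 h_lt1 ler_norml => /(_ isT) /andP[Ha1 _].
have := Hb h; rewrite h_gt0 h_lt2 ler_norml => /(_ isT) /andP[_ Hb2].
rewrite -(@ler_pM2l _ (h ^+ 2)) ?exprn_gt0 //; lra.
Qed.

Lemma approx_sq_unique D a b : approx_sq D a -> approx_sq D b -> a = b.
Proof. by move=> Da Db; apply/le_anti; rewrite !(approx_sq_le Da Db, approx_sq_le Db Da). Qed.

End SecondOrderRate.

Section SecondDifference.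
Variables (R : realType) (n : nat).
Implicit Types (f g : 'rV[R]_n -> R) (x y : 'rV[R]_n).
Local Notation e := (@ebasis R n).

Lemma is_derive_line f x v (s : R) :
  derivable f (x + s *: v) v ->
  is_derive s 1 (fun t => f (x + t *: v)) ('D_v f (x + s *: v)).
Proof.
move=> df.
have E : (fun h : R => h^-1 *: (((fun t => f (x + t *: v)) \o shift s) (h *: 1)
             - f (x + s *: v))) =
         (fun h : R => h^-1 *: ((f \o shift (x + s *: v)) (h *: v) - f (x + s *: v))).
  apply/funext => h /=; congr (_ *: (f _ - _)).
  by rewrite scalerDl [_%:A]mulr1 addrCA.
by split; rewrite ?/derivable /derive E.
Qed.

Definition second_diff f i j x (h : R) :=
  f (x + h *: e j + h *: e i) - f (x + h *: e i) - f (x + h *: e j) + f x.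

Lemma second_diffC f i j x h : second_diff f i j x h = second_diff f j i x h.
Proof. by rewrite /second_diff [x + h *: e i + _]addrAC; ring. Qed.

Lemma second_diff_mvt f i j x h : 0 < h ->
  (forall c, 0 <= c <= h -> differentiable f (x + h *: e j + c *: e i)) ->
  (forall c, 0 <= c <= h -> differentiable f (x + c *: e i)) ->
  exists2 c, 0 < c < h &
    second_diff f i j x h = h * (pd i f (x + h *: e j + c *: e i) - pd i f (x + c *: e i)).
Proof.
move=> h_gt0 df1 df2.
pose phi t := f (x + h *: e j + t *: e i) - f (x + t *: e i).
pose dphi t := pd i f (x + h *: e j + t *: e i) - pd i f (x + t *: e i).
have phi_der t : 0 <= t <= h -> is_derive t 1 phi (dphi t).
  by move=> ht; apply: is_deriveB; apply/is_derive_line/diff_derivable;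
    [exact: df1 | exact: df2].
have [c] : exists2 c, c \in `]0, h[ & phi h - phi 0 = dphi c * (h - 0).
  apply: MVT => //.
    by move=> t; rewrite in_itv /= => /andP[t0 th]; apply: phi_der; rewrite !ltW.
  apply: derivable_within_continuous => t; rewrite in_itv /= => ht.
  by have [] := phi_der t ht.
rewrite in_itv /= => c_in Hc; exists c => //.
rewrite mulrC -[h in _ * h]subr0 -Hc /phi /second_diff !scale0r !addr0; ring.
Qed.

Lemma second_diff_approx f i j x d : 0 < d ->
  (forall y, `|y| < d -> differentiable f (x + y)) ->
  differentiable (pd i f) x ->
  approx_sq (second_diff f i j x) (pd j (pd i f) x).
Proof.
move=> d_gt0 df dg eps eps_gt0; set g := pd i f.
set K := `|e i| + `|e j| + 1.
have K_gt0 : 0 < K by rewrite /K; have := normr_ge0 (e i); have := normr_ge0 (e j); lra.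
set eps' := eps / (2 * K).
have eps'_gt0 : 0 < eps' by rewrite divr_gt0 // mulr_gt0.
have [d1 /= d1_gt0 g_lin] : exists2 d1, 0 < d1 & forall y, `|y| < d1 ->
    `|g (y + x) - (g x + 'd g x y)| <= eps' * `|y|.
  by have /eqaddoP /(_ eps' eps'_gt0) /nbhs_norm0P := diff_locally dg.
have m_gt0 : 0 < Num.min d d1 by rewrite lt_min d_gt0.
exists (Num.min d d1 / K); first by rewrite divr_gt0.
move=> h /andP[h_gt0]; rewrite ltr_pdivlMr // lt_min => /andP[hK_d hK_d1].
have K_ge c : 0 <= c <= h -> c * `|e i| + h * `|e j| <= h * K.
  move=> /andP[c_ge0 c_le].
  by have := normr_ge0 (e i); have := normr_ge0 (e j); rewrite /K; nra.
have small1 c : 0 <= c <= h -> `|c *: e i + h *: e j| <= h * K.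
  move=> /[dup] /andP[c_ge0 _] /K_ge; apply: le_trans; apply: le_trans (ler_normD _ _) _.
  by rewrite !normrZ (ger0_norm c_ge0) (ger0_norm (ltW h_gt0)).
have small2 c : 0 <= c <= h -> `|c *: e i| <= h * K.
  move=> /[dup] /andP[c_ge0 _] /K_ge; apply: le_trans.
  by rewrite normrZ (ger0_norm c_ge0) lerDl mulr_ge0 ?normr_ge0 ?ltW.
have [c /andP[c_gt0 c_lt] ->] : exists2 c, 0 < c < h &
    second_diff f i j x h = h * (g (x + h *: e j + c *: e i) - g (x + c *: e i)).
  apply: second_diff_mvt => // c hc.
    by rewrite -addrA [_ + c *: _]addrC; apply/df/(le_lt_trans (small1 c hc)).
  exact/df/(le_lt_trans (small2 c hc)).
have hc : 0 <= c <= h by rewrite !ltW.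
have y1_small := small1 c hc; have y2_small := small2 c hc.
set y1 := c *: e i + h *: e j in y1_small; set y2 := c *: e i in y2_small.
have r1 := g_lin y1 (le_lt_trans y1_small hK_d1).
have r2 := g_lin y2 (le_lt_trans y2_small hK_d1).
have lin : 'd g x y1 - 'd g x y2 = h * pd j g x.
  by rewrite -linearB /y1 /y2 addrAC subrr add0r linearZ /= /pd deriveE.
have -> : h * (g (x + h *: e j + c *: e i) - g (x + c *: e i)) - h ^+ 2 * pd j g x =
   h * ((g (y1 + x) - (g x + 'd g x y1)) - (g (y2 + x) - (g x + 'd g x y2))).
  have -> : y1 + x = x + h *: e j + c *: e i.
    by rewrite /y1 [c *: _ + _]addrC [_ + x]addrC addrA.
  by rewrite [y2 + x]addrC expr2 -mulrA -lin; ring.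
rewrite normrM gtr0_norm // [eps * _](_ : _ = h * (2 * eps' * (h * K))); last first.
  by rewrite /eps'; field; rewrite gt_eqF.
rewrite ler_pM2l //; apply: le_trans (ler_normB _ _) _.
by have := normr_ge0 y1; have := normr_ge0 y2; nra.
Qed.

Lemma pd_comm f i j x d : 0 < d ->
  (forall y, `|y| < d -> differentiable f (x + y)) ->
  differentiable (pd i f) x -> differentiable (pd j f) x ->
  pd j (pd i f) x = pd i (pd j f) x.
Proof.
move=> d_gt0 df dfi dfj; apply: (approx_sq_unique (second_diff_approx j d_gt0 df dfi)).
have -> : second_diff f i j x = second_diff f j i x by apply/funext => h; exact: second_diffC.
exact: second_diff_approx d_gt0 df dfj.
Qed.
End SecondDifference.

Section Homogeneous.
Variables (R : realType) (n : nat).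
Implicit Types (f : 'rV[R]_n -> R) (x v : 'rV[R]_n).

Definition homog1 f := forall (t : R) x, 0 < t -> f (t *: x) = t * f x.

Lemma derive_scale_comp f (t : R) x v :
  'D_v (fun y => f (t *: y)) x = 'D_(t *: v) f (t *: x).
Proof.
rewrite /derive.
have -> : (fun h : R => h^-1 *: (((fun y => f (t *: y)) \o shift x) (h *: v) - f (t *: x)))
  = (fun h : R => h^-1 *: ((f \o shift (t *: x)) (h *: (t *: v)) - f (t *: x))).
  by apply/funext => h /=; congr (_ *: (f _ - _)); rewrite scalerDr !scalerA mulrC.
by [].
Qed.

Lemma derive_homog1 f x v (t : R) : homog1 f -> 0 < t ->
  differentiable f (t *: x) -> derivable f x v -> 'D_v f (t *: x) = 'D_v f x.
Proof.
move=> f_homog t_gt0 df dv; apply: (mulfI (lt0r_neq0 t_gt0)).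
have -> : t * 'D_v f (t *: x) = 'D_v (fun y => f (t *: y)) x.
  by rewrite derive_scale_comp !deriveE // linearZ.
have -> : (fun y => f (t *: y)) = t \*o f by apply/funext => y; rewrite f_homog.
by rewrite deriveMl.
Qed.

Lemma euler_homog1 f x : (forall t, 0 < t -> f (t *: x) = t * f x) ->
  differentiable f x -> \sum_i x 0 i * pd i f x = f x.
Proof.
move=> f_homog df; transitivity ('D_x f x).
  rewrite deriveE //; have -> : 'd f x x = 'd f x (\sum_j x 0 j *: delta_mx 0 j).
    by rewrite -row_sum_delta.
  rewrite linear_sum /=.
  by apply: eq_bigr => i _; rewrite linearZ /= /pd deriveE.
rewrite /derive; apply: lim_near_cst => //=; near=> h.
have h_gt : -1 < h.
  have : `|h| < 1 by near: h; exact: dnbhs0_lt.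
  by rewrite ltr_norml => /andP[].
have h_neq0 : h != 0 by near: h; exact: nbhs_dnbhs_neq.
rewrite -[X in f (_ + X)]scale1r -scalerDl f_homog ?subr_gt0 //; last lra.
by rewrite /GRing.scale /=; field.
Unshelve. all: by end_near.
Qed.

End Homogeneous.

Lemma near_neq0 (R : realType) (n : nat) (x : 'rV[R]_n) : x != 0 ->
  \forall y \near x, y != 0.
Proof.
move=> x_neq0; apply/nbhs_normP; exists `|x|; first by rewrite /= normr_gt0.
by move=> y /=; apply: contraTneq => ->; rewrite subr0 ltxx.
Qed.

Section NormSquare.
Variables (R : realType) (n : nat) (F : 'rV[R]_n -> R).
Hypothesis F_homog : homog1 F.
Hypothesis F_diff : forall y, y != 0 -> differentiable F y.
Hypothesis pdF_diff : forall j y, y != 0 -> differentiable (pd j F) y.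

Let sq_fctE : (fun z => F z ^+ 2) = F ^+ 2.
Proof. by apply/funext => z; rewrite exprfctE. Qed.

Lemma pd_sq j y : y != 0 -> pd j (fun z => F z ^+ 2) y = 2 * (F y * pd j F y).
Proof.
move=> y_neq0; rewrite sq_fctE /pd deriveX; last exact/diff_derivable/F_diff.
by rewrite /= expr1 /GRing.scale /=; ring.
Qed.

Lemma pd_half_sq j y : y != 0 -> pd j (fun z => F z ^+ 2 / 2) y = F y * pd j F y.
Proof.
move=> y_neq0; have -> : (fun z => F z ^+ 2 / 2) = 2^-1 \*o F ^+ 2.
  by apply/funext => z /=; rewrite exprfctE mulrC.
rewrite {1}/pd deriveMl; last exact/derivableX/diff_derivable/F_diff.
rewrite -sq_fctE -/(pd j (fun z => F z ^+ 2) y) (pd_sq _ y_neq0).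
by rewrite mulKf ?pnatr_eq0.
Qed.

Variable xi : 'rV[R]_n.
Hypothesis xi_neq0 : xi != 0.

Definition hess_half_sq i j := pd i (pd j (fun z => F z ^+ 2 / 2)) xi.

Lemma differentiable_F_pdF j : differentiable (F * pd j F) xi.
Proof. by apply: differentiableM; [exact: F_diff | exact: pdF_diff]. Qed.

Lemma hess_half_sqE i j : hess_half_sq i j = pd i (F * pd j F) xi.
Proof.
apply: near_eq_derive; near=> y; apply: pd_half_sq.
by near: y; exact: near_neq0.
Unshelve. all: by end_near.
Qed.

Lemma hess_sqE i j : hess (fun z => F z ^+ 2) xi i j = 2 * hess_half_sq i j.
Proof.
rewrite mxE hess_half_sqE; transitivity (pd i (2 \*o (F * pd j F)) xi).
  apply: near_eq_derive; near=> y; apply: pd_sq.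
  by near: y; exact: near_neq0.
by rewrite {1}/pd deriveMl; last exact/diff_derivable/differentiable_F_pdF.
Unshelve. all: by end_near.
Qed.

Lemma hess_half_sq_prod i j :
  hess_half_sq i j = pd i F xi * pd j F xi + F xi * pd i (pd j F) xi.
Proof.
rewrite hess_half_sqE {1}/pd deriveM; last 2 first.
- exact/diff_derivable/F_diff.
- exact/diff_derivable/pdF_diff.
by rewrite -/(pd i F xi) -/(pd i (pd j F) xi) /GRing.scale /=; ring.
Qed.

Lemma hess_half_sq_sym : is_symmetric hess_half_sq.
Proof.
move=> i j; rewrite !hess_half_sq_prod (@pd_comm _ _ F i j xi `|xi|).
- by rewrite mulrC.
- by rewrite normr_gt0.
- move=> y y_small; apply: F_diff; apply: contraTneq y_small => /eqP.
  by rewrite addr_eq0 => /eqP ->; rewrite normrN ltxx.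
- exact: pdF_diff.
- exact: pdF_diff.
Qed.

Lemma hess_half_sq_psd : strongly_convex F -> is_psd hess_half_sq.
Proof.
move=> F_sc v; pose w := \row_i v i.
have [w0 | w_neq0] := eqVneq w 0.
  rewrite /qform /bform big1 // => i _; rewrite big1 // => j _.
  by have /matrixP /(_ 0 i) := w0; rewrite !mxE => ->; rewrite !mul0r.
have := F_sc xi xi_neq0 w w_neq0; rewrite mxE.
under eq_bigr => j _ do rewrite !mxE big_distrl /=.
rewrite exchange_big /=.
have -> : \sum_i \sum_j w 0 i * hess (fun z => F z ^+ 2) xi i j * v j =
    2 * qform hess_half_sq v.
  rewrite /qform /bform mulr_sumr; apply: eq_bigr => i _; rewrite mulr_sumr.
  by apply: eq_bigr => j _; rewrite hess_sqE /w mxE; ring.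
by rewrite pmulr_rgt0 // => /ltW.
Qed.

Lemma euler_pd : \sum_i xi 0 i * pd i F xi = F xi.
Proof. by apply: euler_homog1 => [t t_gt0|]; [exact: F_homog | exact: F_diff]. Qed.

Lemma euler_hess_half_sq j : \sum_i xi 0 i * hess_half_sq i j = F xi * pd j F xi.
Proof.
under eq_bigr => i _ do rewrite hess_half_sqE.
apply: euler_homog1 (differentiable_F_pdF j) => t t_gt0 /=.
have txi_neq0 : t *: xi != 0 by rewrite scaler_eq0 negb_or xi_neq0 gt_eqF.
change (F (t *: xi) * pd j F (t *: xi) = t * (F xi * pd j F xi)).
rewrite F_homog // /pd derive_homog1 //; first by rewrite mulrA.
- exact: F_diff.
- exact/diff_derivable/F_diff.
Qed.

End NormSquare.

Unset Implicit Arguments.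

Theorem lemma2p3 (R : realType) (n : nat) (F : 'rV[R]_n -> R)
  (U : set 'rV[R]_n) (u : 'rV[R]_n -> R) (x : 'rV[R]_n) :
  is_norm F -> strongly_convex F -> Ck 3 (~` [set 0]) F ->
  open U -> Ck 2 U u -> U x -> grad u x != 0 ->
  let xi := grad u x in
  let a := fun i j : 'I_n => pd i (pd j (fun z => F z ^+ 2 / 2)) xi in
  let Fd := fun i : 'I_n => pd i F xi in
  let uu := fun i j : 'I_n => pd i (pd j u) x in
  \sum_i \sum_j \sum_k \sum_l a i j * a k l * uu i k * uu j l
    >= \sum_i \sum_j \sum_k \sum_l a i j * Fd k * Fd l * uu i k * uu j l.
Proof.
move=> [_ [_ [_ [F_homog [_ F_pos]]]]] F_sc [F_diff0 pdF_Ck] _ _ _ xi_neq0.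
cbv zeta; set xi := grad u x.
have F_diff y : y != 0 -> differentiable F y.
  by move=> y_neq0; apply: F_diff0 => /eqP; rewrite (negbTE y_neq0).
have pdF_diff j y : y != 0 -> differentiable (pd j F) y.
  by move=> y_neq0; apply: (pdF_Ck j).1 => /eqP; rewrite (negbTE y_neq0).
have F_neq0 : F xi != 0 by rewrite gt_eqF ?F_pos.
apply: (sandwich_ge_rank_one (q := fun i => xi 0 i / F xi)).
- exact: hess_half_sq_sym.
- exact: hess_half_sq_psd.
- move=> j; rewrite -[pd j F xi](mulKf F_neq0).
  rewrite -(euler_hess_half_sq F_homog F_diff pdF_diff xi_neq0) big_distrr.
  by apply: eq_bigr => i _; rewrite mulrAC mulrC.
- rewrite -(divff F_neq0) -[X in _ = X / _](euler_pd F_homog F_diff xi_neq0) mulr_suml.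
  by apply: eq_bigr => i _; rewrite mulrA [pd i F xi * _]mulrC.
Qed.
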